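(* Let $n_\text{in}\ge1$, $n_\text{out}=2$, $\mathbf{W}\in\mathbb{R}^{2\times n_\text{in}}$, $\mathbf{b}\in\mathbb{R}^{2}$, $\mathbf{c}\in\mathbb{R}^{n_\text{in}}$, $\mathbf{U}=[\mathbf{u}_1\,\ldots\,\mathbf{u}_{n_\text{in}}]\in\mathbb{R}^{n_\text{in}\times n_\text{in}}$, and $r\in[0,1]$. Let $\mathcal{P}(\mathbf{U})=\{\mathbf{c}+\sum_j\lambda_j\mathbf{u}_j:\lambda\in[0,1]^{n_\text{in}}\}$, $\mathcal{P}(\mathbf{U}^L)=\{\mathbf{c}+\lambda_1 r\mathbf{u}_1+\sum_{j\ge2}\lambda_j\mathbf{u}_j:\lambda\in[0,1]^{n_\text{in}}\}$, $\mathcal{P}(\mathbf{U}^R)=\{\mathbf{c}+r\mathbf{u}_1+\lambda_1(1-r)\mathbf{u}_1+\sum_{j\ge2}\lambda_j\mathbf{u}_j:\lambda\in[0,1]^{n_\text{in}}\}$, and let $\mathcal{P}(\mathbf{V}),\mathcal{P}(\mathbf{V}^L),\mathcal{P}(\mathbf{V}^R)$ be their respective images under $\mathbf{x}\mapsto\mathbf{W}\mathbf{x}+\mathbf{b}$. Let $\mathbf{v}_1=\mathbf{W}\mathbf{u}_1$ with coordinates $v_{1,1},v_{1,2}$. Then \[ \mathrm{Vol}(\mathcal{B}(\mathbf{V}))-\mathrm{Vol}\big(\mathcal{B}(\mathbf{V}^L)\cup\mathcal{B}(\mathbf{V}^R)\big)=2r(1-r)\,|v_{1,1}|\,|v_{1,2}|.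 \]
   Context: For a parallelotope $\mathcal{P}\subset\mathbb{R}^{n_\text{out}}$, $\mathcal{B}(\cdot)$ denotes the smallest axis-aligned hyperrectangle containing it (the Cartesian product over coordinates of the interval between the minimal and maximal coordinate of its vertices); $\mathrm{Vol}$ is Lebesgue area/volume. *)

From HB Require Import structures.
From mathcomp Require Import all_boot all_order all_algebra.
From mathcomp Require Import all_classical all_reals all_analysis.
Set Implicit Arguments. Unset Strict Implicit. Unset Printing Implicit Defensive.
Import Order.TTheory GRing.Theory Num.Theory.
Local Open Scope classical_set_scope.
Local Open Scope ring_scope.

Definition paral (R : realType) (m n : nat) (c : 'cV[R]_m) (G : 'M[R]_(m, n))
  : set 'cV[R]_m :=
  [set c + G *m lam | lam in [set lam : 'cV[R]_n | forall j, 0 <= lam j 0 <= 1]].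

Definition affimg (R : realType) (m k : nat) (W : 'M[R]_(k, m)) (b : 'cV[R]_k)
  (P : set 'cV[R]_m) : set 'cV[R]_k := [set W *m x + b | x in P].

Definition scale_col0 (R : realType) (m n : nat) (s : R) (U : 'M[R]_(m, n.+1))
  : 'M[R]_(m, n.+1) :=
  \matrix_(i, j) (if j == ord0 then s * U i j else U i j).

(* Smallest axis-aligned box of a set P in R^2 (as a subset of R * R):
   product over the two coordinates of [min_P x_k, max_P x_k]; for a compact
   P (e.g. a parallelotope) the coordinate-wise interval between minimal and
   maximal coordinate is exactly the set of values lying between two
   coordinates attained on P. *)
Definition bbox2 (R : realType) (P : set 'cV[R]_2) : set (R * R) :=
  [set xy | (exists p q, P p /\ P q /\ p 0 0 <= xy.1 <= q 0 0) /\
            (exists p q, P p /\ P q /\ p 1 0 <= xy.2 <= q 1 0)].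

Definition leb2 (R : realType) :=
  ((@lebesgue_measure R) \x (@lebesgue_measure R))%E.

(* Along coordinate k the bounding box of the affine image of a
   parallelotope with generators M = W U and base point e = W c + b is
   [e_k + sum_j min(0, M_kj), e_k + sum_j max(0, M_kj)]; its side is
   |v_1k| + D_k, where D_k = sum_(j >= 2) |M_kj| does not see the first
   generator.  Splitting the first generator at r gives two boxes of sides
   r |v_1k| + D_k and (1 - r) |v_1k| + D_k overlapping in a box of sides D_k,
   so by inclusion-exclusion the area lost is
   (1 - r^2 - (1 - r)^2) |v_11| |v_12| = 2 r (1 - r) |v_11| |v_12|. *)
From HB Require Import structures.
From mathcomp Require Import all_boot all_order all_algebra.
From mathcomp Require Import all_classical all_reals all_analysis.
From mathcomp Require Import ring lra.
Import Order.TTheory GRing.Theory Num.Theory.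
Local Open Scope classical_set_scope.
Local Open Scope ring_scope.
Set Implicit Arguments.
Unset Strict Implicit.

Section Boxes.
Variable R : realType.

Definition box (lo hi : 'I_2 -> R) : set (R * R) :=
  `[lo 0, hi 0] `*` `[lo 1, hi 1].

Lemma lebesgue_measure_itvcc (x y : R) : x <= y ->
  lebesgue_measure (`[x, y] : set R) = (y - x)%:E.
Proof.
move=> xy; rewrite lebesgue_measure_itv /= lte_fin.
by case: ltgtP xy => // -> _; rewrite subrr.
Qed.

Lemma measurable_box lo hi : measurable (box lo hi).
Proof. by apply: measurableX; exact: measurable_itv. Qed.

Lemma leb2_box lo hi : (forall k, lo k <= hi k) ->
  leb2 (box lo hi) = ((hi 0 - lo 0) * (hi 1 - lo 1))%:E.
Proof.
move=> lohi; rewrite /leb2 product_measure1E; try exact: measurable_itv.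
by rewrite EFinM; congr (_ * _)%E; exact: lebesgue_measure_itvcc.
Qed.

Lemma boxI lo1 hi1 lo2 hi2 :
  box lo1 hi1 `&` box lo2 hi2 =
  box (fun k => Num.max (lo1 k) (lo2 k)) (fun k => Num.min (hi1 k) (hi2 k)).
Proof.
rewrite /box -setXI; congr (_ `*` _); apply/seteqP; split => z /=;
  rewrite !in_itv /= ge_max le_min.
all: by [case/and3P=> /andP[-> ->] -> -> | move=> [/andP[-> ->] /andP[-> ->]]].
Qed.

Lemma leb2_boxU lo1 hi1 lo2 hi2 : (forall k, lo1 k <= hi1 k) ->
  leb2 (box lo1 hi1 `|` box lo2 hi2) =
  (leb2 (box lo1 hi1) + leb2 (box lo2 hi2) - leb2 (box lo1 hi1 `&` box lo2 hi2))%E.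
Proof.
move=> lohi1; rewrite /leb2 measureUfinl //; try exact: measurable_box.
by suff : (leb2 (box lo1 hi1) < +oo)%E by []; rewrite leb2_box ?ltry.
Qed.

End Boxes.

Section BoundingBox.
Variable R : realType.

Definition bbox_lo N (M : 'M[R]_(2, N)) (e : 'cV[R]_2) (k : 'I_2) :=
  e k 0 + \sum_j Num.min 0 (M k j).

Definition bbox_hi N (M : 'M[R]_(2, N)) (e : 'cV[R]_2) (k : 'I_2) :=
  e k 0 + \sum_j Num.max 0 (M k j).

Lemma bbox_lo_le_hi N (M : 'M[R]_(2, N)) e k : bbox_lo M e k <= bbox_hi M e k.
Proof.
by rewrite lerD2l; apply: ler_sum => j _; case: (leP 0 (M k j)) => Mkj; lra.
Qed.

Lemma ge_min0_mul (v l : R) : 0 <= l <= 1 -> Num.min 0 v <= v * l.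
Proof. by case/andP=> l0 l1; case: (leP 0 v) => v0; nra. Qed.

Lemma le_max0_mul (v l : R) : 0 <= l <= 1 -> v * l <= Num.max 0 v.
Proof. by case/andP=> l0 l1; case: (leP 0 v) => v0; nra. Qed.

Variables (m N : nat) (W : 'M[R]_(2, m)) (b : 'cV[R]_2) (c : 'cV[R]_m).
Variable G : 'M[R]_(m, N).

Let M := W *m G.
Let e := W *m c + b.
Let P := affimg W b (paral c G).

Lemma affimg_paral_coord (lam : 'cV[R]_N) k :
  (W *m (c + G *m lam) + b) k 0 = e k 0 + \sum_j M k j * lam j 0.
Proof.
have -> : W *m (c + G *m lam) + b = e + M *m lam.
  by rewrite mulmxDr mulmxA addrAC.
by rewrite [LHS]mxE [X in _ + X]mxE.
Qed.

Lemma affimg_paral_coord_bounds x k : P x ->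
  bbox_lo M e k <= x k 0 <= bbox_hi M e k.
Proof.
move=> [_ [lam hlam <-] <-]; rewrite affimg_paral_coord lerD2l lerD2l.
by apply/andP; split; apply: ler_sum => j _; [exact: ge_min0_mul|exact: le_max0_mul].
Qed.

Lemma affimg_paral_vertex (S : pred 'I_N) k :
  exists2 x, P x & x k 0 = e k 0 + \sum_(j | S j) M k j.
Proof.
pose lam : 'cV[R]_N := \col_j (S j)%:R.
exists (W *m (c + G *m lam) + b).
  exists (c + G *m lam) => //; exists lam => // j.
  by rewrite mxE; case: (S j); rewrite ?lexx ?ler01.
rewrite affimg_paral_coord; congr (_ + _); rewrite [RHS]big_mkcond.
by apply: eq_bigr => j _; rewrite [lam _ _]mxE; case: (S j); rewrite ?mulr1 ?mulr0.
Qed.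

Lemma affimg_paral_lo_attained k : exists2 x, P x & x k 0 = bbox_lo M e k.
Proof.
have [x Px xk] := affimg_paral_vertex (fun j => M k j < 0) k.
exists x => //; rewrite xk; congr (_ + _); rewrite [LHS]big_mkcond /=.
by apply: eq_bigr => j _; case: (ltP (M k j) 0).
Qed.

Lemma affimg_paral_hi_attained k : exists2 x, P x & x k 0 = bbox_hi M e k.
Proof.
have [x Px xk] := affimg_paral_vertex (fun j => 0 < M k j) k.
exists x => //; rewrite xk; congr (_ + _); rewrite [LHS]big_mkcond /=.
by apply: eq_bigr => j _; case: (ltP 0 (M k j)).
Qed.

Lemma bbox2_affimg_paral : bbox2 P = box (bbox_lo M e) (bbox_hi M e).
Proof.
apply/seteqP; split => -[y1 y2]; rewrite /bbox2 /box /= !in_itv /=.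
  move=> [[p [q [Pp [Pq /andP[pq1 pq2]]]]] [p' [q' [Pp' [Pq' /andP[pq1' pq2']]]]]].
  have /andP[lo_p _] := affimg_paral_coord_bounds 0 Pp.
  have /andP[_ hi_q] := affimg_paral_coord_bounds 0 Pq.
  have /andP[lo_p' _] := affimg_paral_coord_bounds 1 Pp'.
  have /andP[_ hi_q'] := affimg_paral_coord_bounds 1 Pq'.
  by split; apply/andP; split; apply: le_trans; eassumption.
move=> [/andP[lo1 hi1] /andP[lo2 hi2]].
have [p0 Pp0 e0] := affimg_paral_lo_attained 0.
have [q0 Pq0 f0] := affimg_paral_hi_attained 0.
have [p1 Pp1 e1] := affimg_paral_lo_attained 1.
have [q1 Pq1 f1] := affimg_paral_hi_attained 1.
by split; [exists p0, q0; rewrite e0 f0 lo1 hi1|exists p1, q1; rewrite e1 f1 lo2 hi2].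
Qed.

End BoundingBox.

Lemma mulmx_col (R : pzSemiRingType) m n p (A : 'M[R]_(m, n)) (B : 'M[R]_(n, p)) j :
  A *m col j B = col j (A *m B).
Proof. by apply/matrixP => i k; rewrite !mxE; apply: eq_bigr => l _; rewrite mxE. Qed.

Lemma norm_max0_min0 (R : realDomainType) (x : R) : `|x| = Num.max 0 x - Num.min 0 x.
Proof. by case: (leP 0 x) => x0; [rewrite ger0_norm|rewrite ltr0_norm]; lra. Qed.

Section SplitFirstGenerator.
Variables (R : realType) (n : nat) (W : 'M[R]_(2, n.+1)) (U : 'M[R]_n.+1).

Local Notation v1 k := ((W *m col ord0 U) k 0).

Definition rest_lo k := \sum_(i < n) Num.min 0 ((W *m U) k (lift ord0 i)).
Definition rest_hi k := \sum_(i < n) Num.max 0 ((W *m U) k (lift ord0 i)).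

Lemma scale_col01 : scale_col0 1 U = U.
Proof. by apply/matrixP => i j; rewrite mxE; case: eqP; rewrite ?mul1r. Qed.

Lemma mulmx_scale_col0E s k j : (W *m scale_col0 s U) k j =
  if j == ord0 then s * (W *m U) k j else (W *m U) k j.
Proof.
rewrite !mxE; case: eqP => [->|/eqP j0].
  by rewrite mulr_sumr; apply: eq_bigr => i _; rewrite mxE eqxx mulrCA.
by apply: eq_bigr => i _; rewrite mxE (negbTE j0).
Qed.

Lemma bbox_lo_scale_col0 s e k : 0 <= s ->
  bbox_lo (W *m scale_col0 s U) e k = e k 0 + s * Num.min 0 (v1 k) + rest_lo k.
Proof.
move=> s0; rewrite /bbox_lo big_ord_recl mulmx_scale_col0E eqxx addrA.
rewrite mulmx_col [col _ _ _ _]mxE minr_pMr // mulr0; congr (_ + _).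
by apply: eq_bigr => i _; rewrite mulmx_scale_col0E eq_sym (negbTE (neq_lift _ _)).
Qed.

Lemma bbox_hi_scale_col0 s e k : 0 <= s ->
  bbox_hi (W *m scale_col0 s U) e k = e k 0 + s * Num.max 0 (v1 k) + rest_hi k.
Proof.
move=> s0; rewrite /bbox_hi big_ord_recl mulmx_scale_col0E eqxx addrA.
rewrite mulmx_col [col _ _ _ _]mxE maxr_pMr // mulr0; congr (_ + _).
by apply: eq_bigr => i _; rewrite mulmx_scale_col0E eq_sym (negbTE (neq_lift _ _)).
Qed.

Lemma bbox_width_scale_col0 s e k : 0 <= s ->
  bbox_hi (W *m scale_col0 s U) e k - bbox_lo (W *m scale_col0 s U) e k =
  s * `|v1 k| + (rest_hi k - rest_lo k).
Proof.
by move=> s0; rewrite bbox_hi_scale_col0 // bbox_lo_scale_col0 // norm_max0_min0; ring.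
Qed.

Lemma rest_lo_le_hi k : rest_lo k <= rest_hi k.
Proof. by apply: ler_sum => i _; case: (leP 0 ((W *m U) k (lift ord0 i))) => h; lra. Qed.

Lemma affine_shift_col0 (c : 'cV[R]_n.+1) b r k :
  (W *m (c + r *: col ord0 U) + b) k 0 = (W *m c + b) k 0 + r * v1 k.
Proof. by rewrite mulmxDr addrAC -scalemxAr [LHS]mxE [X in _ + X]mxE. Qed.

Lemma split_bbox_overlap_width c b r k : 0 <= r <= 1 ->
  let ML := W *m scale_col0 r U in
  let MR := W *m scale_col0 (1 - r) U in
  let eL := W *m c + b in
  let eR := W *m (c + r *: col ord0 U) + b in
  Num.min (bbox_hi ML eL k) (bbox_hi MR eR k) -
  Num.max (bbox_lo ML eL k) (bbox_lo MR eR k) = rest_hi k - rest_lo k.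
Proof.
move=> /andP[r0 r1] ML MR eL eR.
rewrite /ML /MR !bbox_lo_scale_col0 ?bbox_hi_scale_col0 ?subr_ge0 // /eL /eR !affine_shift_col0.
by case: (leP 0 (v1 k)) => v0; [rewrite min_l ?max_r|rewrite min_r ?max_l]; nra.
Qed.

End SplitFirstGenerator.

Theorem corollary1 (R : realType) (n : nat) (W : 'M[R]_(2, n.+1)) (b : 'cV[R]_2)
  (c : 'cV[R]_(n.+1)) (U : 'M[R]_(n.+1)) (r : R) (hr0 : 0 <= r) (hr1 : r <= 1) :
  let u1 := col ord0 U in
  let PV := affimg W b (paral c U) in
  let PVL := affimg W b (paral c (scale_col0 r U)) in
  let PVR := affimg W b (paral (c + r *: u1) (scale_col0 (1 - r) U)) in
  let v1 := W *m u1 in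
  (@leb2 R (bbox2 PV) - @leb2 R (bbox2 PVL `|` bbox2 PVR))%E =
  (2 * r * (1 - r) * `|v1 0 0| * `|v1 1 0|)%:E.
Proof.
move=> u1 PV PVL PVR v1; rewrite /PV /PVL /PVR /v1 /u1.
have r01 : 0 <= r <= 1 by apply/andP.
have r1' : 0 <= 1 - r by rewrite subr_ge0.
rewrite -[in paral c U](scale_col01 U) !bbox2_affimg_paral.
rewrite leb2_boxU => [|k]; last exact: bbox_lo_le_hi.
have overlap k := split_bbox_overlap_width W U c b k r01.
rewrite boxI !leb2_box => [|k|k|k|k]; try exact: bbox_lo_le_hi; last first.
  by rewrite /= -subr_ge0 overlap subr_ge0 rest_lo_le_hi.
rewrite !bbox_width_scale_col0 // !overlap.
by rewrite -EFinD; congr (_%:E); ring.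
Qed.
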